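(* Let $0<a<b$ be real numbers and let $f:(a,b)\to\mathbb{R}$ be real analytic and not identically zero. Assume that: (1) both as $x\to a$ and as $x\to b$ we have $\kappa(f,x)\to\infty$; (2) both as $x\to a$ and as $x\to b$ we have $\limsup |H(f,x)|\leq C$ for some constant $C>0$, where \[H(f,x)=\frac{x^2f(x)f''(x)}{f(x)^2+x^2f'(x)^2}.\] Moreover, the part of hypothesis (2) concerning $x\to a$ (resp. $x\to b$) is automatically satisfied if $f$ admits an analytic extension to $(a-\epsilon,b)$ (resp. $(a,b+\epsilon)$) for some $\epsilon>0$. Then $f$ is amenable.
   Context: Relative distance on $\mathbb{R}$: $\mathrm{dist}(x,y)=0$ if $x=y=0$, $\mathrm{dist}(x,y)=|\log(y/x)|$ if $xy>0$, and $\mathrm{dist}(x,y)=\infty$ otherwise. For a real analytic function $f$ on an open set $\Omega\subseteq\mathbb{R}$ (a union of open intervals), not identically zero, the condition number is $\kappa(f,x)=0$ if $x=0$, $\kappa(f,x)=\infty$ if $x\neq0$ and $f(x)=0$, and $\kappa(f,x)=|x|\,|f'(x)|/|f(x)|$ otherwise; set $\mu(f,x)=1+\kappa(f,x)$. The function $f:\Omega\to\mathbb{R}$ is called amenable if there is a constant $C>0$ such that for every $x\in\Omega$ with $\kappa(f,x)<\infty$, the set $B_x=\{y\in\mathbb{R}:\mathrm{dist}(y,x)<1/(C\mu(f,x))\}$ is contained in $\Omega$, and $\mu(f,y)\leq C\mu(f,x)$ for all $y\in B_x$. *)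

From Stdlib Require Import Reals Lra.
From Coquelicot Require Import Coquelicot.
Open Scope R_scope.

Definition reldist (x y : R) : Rbar :=
  if Req_EM_T x 0 then
    (if Req_EM_T y 0 then Finite 0 else p_infty)
  else if Rlt_dec 0 (x * y) then Finite (Rabs (ln (y / x)))
  else p_infty.

Definition kappa (f : R -> R) (x : R) : Rbar :=
  if Req_EM_T x 0 then Finite 0
  else if Req_EM_T (f x) 0 then p_infty
  else Finite (Rabs x * Rabs (Derive f x) / Rabs (f x)).

Definition mu (f : R -> R) (x : R) : Rbar := Rbar_plus (Finite 1) (kappa f x).

Definition real_analytic_on (Omega : R -> Prop) (f : R -> R) : Prop :=
  forall x0, Omega x0 ->
    exists r : R, 0 < r /\
    exists c : nat -> R,
      forall x, Rabs (x - x0) < r -> is_pseries c (x - x0) (f x).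

Definition ioo (a b : R) : R -> Prop := fun x => a < x /\ x < b.

Definition amenable (Omega : R -> Prop) (f : R -> R) : Prop :=
  exists C : R, 0 < C /\
    forall x, Omega x ->
    forall k : R, kappa f x = Finite k ->
      (forall y, Rbar_lt (reldist y x) (Finite (1 / (C * (1 + k)))) -> Omega y) /\
      (forall y, Rbar_lt (reldist y x) (Finite (1 / (C * (1 + k)))) ->
          Rbar_le (mu f y) (Finite (C * (1 + k)))).

Definition Hfun (f : R -> R) (x : R) : R :=
  x ^ 2 * f x * Derive_n f 2 x / ((f x) ^ 2 + x ^ 2 * (Derive f x) ^ 2).

Definition kappa_to_infty_right (f : R -> R) (a : R) : Prop :=
  forall M : R, exists d : R, 0 < d /\
    forall x, a < x < a + d -> Rbar_lt (Finite M) (kappa f x).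
Definition kappa_to_infty_left (f : R -> R) (b : R) : Prop :=
  forall M : R, exists d : R, 0 < d /\
    forall x, b - d < x < b -> Rbar_lt (Finite M) (kappa f x).

Definition limsup_H_le_right (f : R -> R) (a C : R) : Prop :=
  forall eps : R, 0 < eps -> exists d : R, 0 < d /\
    forall x, a < x < a + d -> Rabs (Hfun f x) <= C + eps.
Definition limsup_H_le_left (f : R -> R) (b C : R) : Prop :=
  forall eps : R, 0 < eps -> exists d : R, 0 < d /\
    forall x, b - d < x < b -> Rabs (Hfun f x) <= C + eps.

(* In the variable t = ln x put A(t) = f(e^t) and B(t) = A'(t) = x f'(x), so that
   kappa(f,x) = |B/A|.  The angle atan(B/A) has t-derivative
   H(f,x) + (AB - B^2)/(A^2 + B^2), and H is bounded on (a,b): near interior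
   points (and near an endpoint across which f extends) by analyticity, near
   the endpoints otherwise by hypothesis (2).  Hence the angle is K-Lipschitz.
   Starting from t0 with kappa = k, for a time 1/((2K+3)(1+k)) the angle moves
   by at most 1/(2(1+k)), which keeps |B/A| <= 2(1+k); integrating
   (ln A^2)' = 2B/A then shows that A cannot vanish in this window, and
   hypothesis (1) that the window cannot reach ln a or ln b. *)

From Stdlib Require Import Reals Lra Lia Classical Wf_nat.
From Coquelicot Require Import Coquelicot.
Open Scope R_scope.

Lemma ball_of_Rabs_lt (x y : R) (e : posreal) : Rabs (y - x) < e -> ball x e y.
Proof. intro H. exact H. Qed.

Lemma is_derive_continuity_pt (f : R -> R) (x l : R) :
  is_derive f x l -> continuity_pt f x.
Proof.
  intro H. apply continuity_pt_filterlim.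
  apply (ex_derive_continuous (K := R_AbsRing) (V := R_NormedModule)).
  exists l. exact H.
Qed.

Lemma continuity_pt_locally_bounded (Q : R -> R) (p : R) :
  continuity_pt Q p -> locally p (fun x => Rabs (Q x) <= Rabs (Q p) + 1).
Proof.
  intro HQ. apply continuity_pt_locally with (eps := mkposreal 1 Rlt_0_1) in HQ.
  revert HQ. apply filter_imp. intros x Hx. simpl in Hx.
  pose proof (Rabs_triang_inv (Q x) (Q p)). lra.
Qed.

Lemma continuity_pt_locally_away (Q : R -> R) (p : R) :
  continuity_pt Q p -> Q p <> 0 -> locally p (fun x => Rabs (Q p) / 2 <= Rabs (Q x)).
Proof.
  intros HQ Hp.
  assert (He : 0 < Rabs (Q p) / 2) by (apply Rabs_pos_lt in Hp; lra).
  apply continuity_pt_locally with (eps := mkposreal _ He) in HQ.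
  revert HQ. apply filter_imp. intros x Hx. simpl in Hx.
  pose proof (Rabs_triang_inv (Q p) (Q x)). rewrite Rabs_minus_sym in Hx. lra.
Qed.

Lemma continuity_pt_ge_of_left (F : R -> R) (t0 w c : R) :
  continuity_pt F w -> t0 < w -> (forall v, t0 <= v < w -> c <= F v) -> c <= F w.
Proof.
  intros HF Hw Hc. apply Rnot_lt_le. intro Hlt.
  assert (He : 0 < c - F w) by lra.
  apply continuity_pt_locally with (eps := mkposreal _ He) in HF.
  destruct HF as [d Hd]. simpl in Hd. pose proof (cond_pos d) as Hd0.
  set (v := Rmax t0 (w - d / 2)).
  assert (Hv : t0 <= v < w) by (split; [apply Rmax_l | unfold v; apply Rmax_case; lra]).
  assert (Hvw : Rabs (v - w) < d).
  { assert (w - d / 2 <= v) by apply Rmax_r.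
    rewrite Rabs_minus_sym, Rabs_pos_eq; lra. }
  specialize (Hd v (ball_of_Rabs_lt _ _ _ Hvw)). specialize (Hc v Hv).
  pose proof (Rle_abs (F v - F w)). lra.
Qed.

Lemma real_induction (P : R -> Prop) (p q : R) : p <= q ->
  (forall s, p <= s <= q -> (forall w, p <= w < s -> P w) -> P s) ->
  (forall s, p <= s < q -> (forall w, p <= w <= s -> P w) -> locally s P) ->
  forall w, p <= w <= q -> P w.
Proof.
  intros Hpq Hclosed Hopen.
  set (E := fun s => p <= s <= q /\ forall w, p <= w <= s -> P w).
  assert (Pp : P p) by (apply Hclosed; [lra | intros w Hw; lra]).
  assert (Ep : E p) by (split; [lra | intros w Hw; replace w with p by lra; exact Pp]).
  destruct (completeness E) as [m [Hub Hlub]].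
  { exists q. intros s [Hs _]. lra. }
  { exists p. exact Ep. }
  assert (Hpm : p <= m) by (apply Hub; exact Ep).
  assert (Hmq : m <= q) by (apply Hlub; intros s [Hs _]; lra).
  assert (Hbelow : forall w, p <= w < m -> P w).
  { intros w Hw. apply NNPP. intro HPw.
    assert (m <= w); [apply Hlub | lra].
    intros s [Hs HPs]. apply Rnot_lt_le. intro Hws. apply HPw, HPs. lra. }
  assert (Em : forall w, p <= w <= m -> P w).
  { intros w Hw. destruct (Req_dec w m) as [->|Hne].
    - apply Hclosed; [lra | exact Hbelow].
    - apply Hbelow. lra. }
  destruct (Req_dec m q) as [<-|Hne]; [exact Em |].
  exfalso. destruct (Hopen m ltac:(lra) Em) as [d Hd]. pose proof (cond_pos d) as Hd0.
  set (s := Rmin (m + d / 2) q).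
  assert (Hs : E s).
  { split; [unfold s; split; [apply Rmin_case; lra | apply Rmin_r] |].
    intros w Hw. destruct (Rle_or_lt w m) as [Hwm|Hwm]; [apply Em; lra |].
    apply Hd, ball_of_Rabs_lt. assert (s <= m + d / 2) by apply Rmin_l.
    rewrite Rabs_pos_eq; lra. }
  specialize (Hub s Hs). unfold s in Hub. revert Hub. apply Rmin_case; lra.
Qed.

Lemma MVT_segment (phi dphi : R -> R) (a b : R) : a <= b ->
  (forall x, a <= x <= b -> is_derive phi x (dphi x)) ->
  exists c, a <= c <= b /\ phi b - phi a = dphi c * (b - a).
Proof.
  intros Hab HD.
  destruct (MVT_gen phi a b dphi) as [c [Hc E]];
    rewrite ?Rmin_left, ?Rmax_right in * by lra.
  - intros x Hx. apply HD. lra.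
  - intros x Hx. apply (is_derive_continuity_pt _ _ (dphi x)), HD. exact Hx.
  - exists c. split; assumption.
Qed.

Lemma MVT_abs_le (phi dphi : R -> R) (a b K : R) : a <= b ->
  (forall x, a <= x <= b -> is_derive phi x (dphi x)) ->
  (forall x, a <= x <= b -> Rabs (dphi x) <= K) ->
  Rabs (phi b - phi a) <= K * (b - a).
Proof.
  intros Hab HD HK. destruct (MVT_segment phi dphi a b Hab HD) as [c [Hc ->]].
  rewrite Rabs_mult, (Rabs_pos_eq (b - a)) by lra.
  apply Rmult_le_compat_r; [lra | exact (HK c Hc)].
Qed.

Lemma MVT_nonneg (phi dphi : R -> R) (a b : R) : a <= b ->
  (forall x, a <= x <= b -> is_derive phi x (dphi x)) ->
  (forall x, a <= x <= b -> 0 <= dphi x) -> phi a <= phi b.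
Proof.
  intros Hab HD Hpos. destruct (MVT_segment phi dphi a b Hab HD) as [c [Hc E]].
  assert (0 <= dphi c * (b - a)) by (apply Rmult_le_pos; [exact (Hpos c Hc) | lra]).
  lra.
Qed.

Lemma atan_le_id (y : R) : 0 <= y -> atan y <= y.
Proof.
  intro Hy.
  enough (0 - atan 0 <= y - atan y) by (rewrite atan_0 in H; lra).
  apply (MVT_nonneg (fun t => t - atan t) (fun t => 1 - / (1 + t²))); [exact Hy | |].
  - intros x _. auto_derive; [exact I | unfold Rsqr; field; nra].
  - intros x _. assert (1 <= 1 + x²) by (unfold Rsqr; nra).
    assert (/ (1 + x²) <= 1) by (rewrite <- Rinv_1; apply Rinv_le_contravar; lra). lra.
Qed.

Lemma atan_ge_div (y : R) : 0 <= y -> y / (1 + y) <= atan y.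
Proof.
  intro Hy.
  enough (atan 0 - 0 / (1 + 0) <= atan y - y / (1 + y)) by (rewrite atan_0 in H; lra).
  apply (MVT_nonneg (fun t => atan t - t / (1 + t)) (fun t => / (1 + t²) - / (1 + t) ^ 2));
    [exact Hy | |].
  - intros x Hx. auto_derive; [lra | unfold Rsqr; field; nra].
  - intros x Hx. assert (0 < 1 + x²) by (unfold Rsqr; nra).
    assert (/ (1 + x) ^ 2 <= / (1 + x²)) by (apply Rinv_le_contravar; unfold Rsqr; nra). lra.
Qed.

Lemma Rabs_atan (w : R) : Rabs (atan w) = atan (Rabs w).
Proof.
  destruct (Rle_or_lt 0 w) as [Hw|Hw].
  - rewrite (Rabs_pos_eq w Hw). apply Rabs_pos_eq.
    rewrite <- atan_0. destruct Hw as [Hw| <-]; [left; apply atan_increasing, Hw | lra].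
  - rewrite (Rabs_left w Hw), atan_opp, Rabs_left; [reflexivity |].
    rewrite <- atan_0. apply atan_increasing, Hw.
Qed.

Lemma atan_le_PI2_sub (k : R) : 0 <= k -> atan k <= PI / 2 - / (1 + k).
Proof.
  intros [Hk| <-].
  - rewrite <- (Rinv_inv k) at 1. rewrite atan_inv by (apply Rinv_0_lt_compat, Hk).
    pose proof (atan_ge_div (/ k) (Rlt_le _ _ (Rinv_0_lt_compat _ Hk))).
    replace (/ k / (1 + / k)) with (/ (1 + k)) in H by (field; lra). lra.
  - rewrite atan_0, Rplus_0_r, Rinv_1. pose proof PI2_1. lra.
Qed.

Lemma Rabs_le_of_atan_le (k w : R) : 0 <= k ->
  Rabs (atan w) <= atan k + / (2 * (1 + k)) -> Rabs w <= 2 * (1 + k).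
Proof.
  intros Hk Hw. apply Rnot_lt_le. intro Hlt. set (m := 2 * (1 + k)) in *.
  assert (Hm : 0 < m) by (unfold m; lra).
  pose proof (atan_increasing _ _ Hlt) as H1. rewrite <- Rabs_atan in H1.
  rewrite <- (Rinv_inv m) in H1 at 1. rewrite atan_inv in H1 by (apply Rinv_0_lt_compat, Hm).
  pose proof (atan_le_id (/ m) (Rlt_le _ _ (Rinv_0_lt_compat _ Hm))).
  pose proof (atan_le_PI2_sub k Hk).
  assert (/ m = / (1 + k) - / m) by (unfold m; field; lra). lra.
Qed.

Lemma exp_le (x y : R) : x <= y -> exp x <= exp y.
Proof. intros [H| ->]; [left; apply exp_increasing, H | right; reflexivity]. Qed.

Lemma is_derive_ln_sq (A : R -> R) (t dA : R) : A t <> 0 -> is_derive A t dA ->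
  is_derive (fun s => ln (A s ^ 2)) t (2 * dA / A t).
Proof.
  intros HA HD.
  assert (Hp : 0 < A t ^ 2) by (apply pow2_gt_0; exact HA).
  eapply is_derive_ext; [intro s; reflexivity |].
  replace (2 * dA / A t) with (scal (INR 2 * dA * A t ^ pred 2) (/ A t ^ 2))
    by (unfold scal; simpl; unfold mult; simpl; field; exact HA).
  apply (is_derive_comp ln (fun s => A s ^ 2)); [apply is_derive_ln, Hp |].
  apply is_derive_pow, HD.
Qed.

Lemma sq_ge_of_log_derivative_le (A B : R -> R) (t0 v m : R) : t0 <= v ->
  (forall u, t0 <= u <= v -> is_derive A u (B u)) ->
  (forall u, t0 <= u <= v -> A u <> 0) ->
  (forall u, t0 <= u <= v -> Rabs (B u / A u) <= m) ->
  A t0 ^ 2 * exp (- (2 * m * (v - t0))) <= A v ^ 2.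
Proof.
  intros Hv HD Hnz Hm.
  assert (Hlog : Rabs (ln (A v ^ 2) - ln (A t0 ^ 2)) <= 2 * m * (v - t0)).
  { apply (MVT_abs_le (fun u => ln (A u ^ 2)) (fun u => 2 * B u / A u)); [exact Hv | |].
    - intros u Hu. apply is_derive_ln_sq; [apply Hnz | apply HD]; exact Hu.
    - intros u Hu. unfold Rdiv. rewrite Rmult_assoc, Rabs_mult, Rabs_pos_eq by lra.
      apply Rmult_le_compat_l; [lra | apply Hm, Hu]. }
  assert (H0 : 0 < A t0 ^ 2) by (apply pow2_gt_0, Hnz; lra).
  assert (Hv0 : 0 < A v ^ 2) by (apply pow2_gt_0, Hnz; lra).
  rewrite <- (exp_ln _ H0), <- (exp_ln _ Hv0), <- exp_plus.
  apply exp_le. apply Rabs_le_between' in Hlog. lra.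
Qed.

(** * Angle comparison for a log-derivative *)

Definition angle_lipschitz_on (al be K : R) (A B : R -> R) : Prop :=
  forall t1 t2, al < t1 -> t1 <= t2 -> t2 < be ->
  (forall s, t1 <= s <= t2 -> A s <> 0) ->
  Rabs (atan (B t2 / A t2) - atan (B t1 / A t1)) <= K * (t2 - t1).

Definition logderiv_blowup_left (al : R) (A B : R -> R) : Prop :=
  forall M, exists d, 0 < d /\ forall t, al < t < al + d -> A t = 0 \/ M < Rabs (B t / A t).

Definition logderiv_blowup_right (be : R) (A B : R -> R) : Prop :=
  forall M, exists d, 0 < d /\ forall t, be - d < t < be -> A t = 0 \/ M < Rabs (B t / A t).

(* Amenability of [A] on [(al, be)], read in the variable [t = ln x]. *)
Definition log_window (al be C : R) (A B : R -> R) : Prop :=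
  forall t0, al < t0 < be -> A t0 <> 0 ->
  forall s, Rabs (s - t0) < 1 / (C * (1 + Rabs (B t0 / A t0))) ->
  al < s < be /\ A s <> 0 /\ 1 + Rabs (B s / A s) <= C * (1 + Rabs (B t0 / A t0)).

Definition window_radius (K k : R) : R := 1 / ((2 * K + 3) * (1 + k)).

Lemma window_radius_pos (K k : R) : 0 <= K -> 0 <= k -> 0 < window_radius K k.
Proof. intros HK Hk. apply Rdiv_lt_0_compat, Rmult_lt_0_compat; lra. Qed.

Lemma window_radius_angle (K k : R) : 0 <= K -> 0 <= k ->
  K * window_radius K k <= / (2 * (1 + k)).
Proof.
  intros HK Hk. unfold window_radius, Rdiv. rewrite Rmult_1_l, !Rinv_mult, <- Rmult_assoc.
  apply Rmult_le_compat_r; [left; apply Rinv_0_lt_compat; lra |].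
  replace (K * / (2 * K + 3)) with (/ 2 - 3 / 2 * / (2 * K + 3)) by (field; lra).
  assert (0 < / (2 * K + 3)) by (apply Rinv_0_lt_compat; lra). lra.
Qed.

Section ForwardWindow.

Variables (al be K : R) (A B : R -> R).
Hypothesis K_ge0 : 0 <= K.
Hypothesis A_derive : forall t, al < t < be -> is_derive A t (B t).
Hypothesis angle_lipschitz : angle_lipschitz_on al be K A B.
Hypothesis blowup_right : logderiv_blowup_right be A B.

Variable t0 : R.
Hypothesis t0_in : al < t0 < be.
Hypothesis A_t0 : A t0 <> 0.

Local Notation k := (Rabs (B t0 / A t0)).
Local Notation r := (window_radius K k).

Lemma ratio_le_in_window (s : R) : t0 <= s < t0 + r -> s < be ->
  (forall w, t0 <= w <= s -> A w <> 0) -> Rabs (B s / A s) <= 2 * (1 + k).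
Proof.
  intros Hs Hsb Hnz. pose proof (Rabs_pos (B t0 / A t0)) as Hk.
  apply Rabs_le_of_atan_le; [exact Hk |].
  assert (HKr : K * (s - t0) <= / (2 * (1 + k))).
  { apply Rle_trans with (K * r); [apply Rmult_le_compat_l; lra |].
    exact (window_radius_angle K k K_ge0 Hk). }
  pose proof (angle_lipschitz t0 s (proj1 t0_in) (proj1 Hs) Hsb Hnz).
  pose proof (Rabs_triang_inv (atan (B s / A s)) (atan (B t0 / A t0))).
  rewrite (Rabs_atan (B t0 / A t0)) in H0. lra.
Qed.

Lemma nonzero_in_window (s : R) : t0 <= s < t0 + r -> s < be ->
  forall w, t0 <= w <= s -> A w <> 0.
Proof.
  intros Hs Hsb. pose proof (Rabs_pos (B t0 / A t0)) as Hk.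
  pose proof (window_radius_pos K k K_ge0 Hk) as Hr.
  apply real_induction; [lra | |].
  - intros w Hw IH. destruct (Req_dec w t0) as [->|Hne]; [exact A_t0 |].
    set (c0 := A t0 ^ 2 * exp (- (2 * (2 * (1 + k)) * r))).
    assert (Hc0 : 0 < c0).
    { apply Rmult_lt_0_compat; [apply pow2_gt_0, A_t0 | apply exp_pos]. }
    enough (c0 <= A w ^ 2) by (intro Hw0; rewrite Hw0 in H; simpl in H; lra).
    apply (continuity_pt_ge_of_left (fun t => A t ^ 2) t0); [| lra |].
    + apply (is_derive_continuity_pt _ _ (INR 2 * B w * A w ^ pred 2)).
      apply is_derive_pow, A_derive. lra.
    + intros v Hv. apply Rle_trans with (A t0 ^ 2 * exp (- (2 * (2 * (1 + k)) * (v - t0)))).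
      * apply Rmult_le_compat_l; [apply pow2_ge_0 |]. apply exp_le.
        apply Ropp_le_contravar, Rmult_le_compat_l; lra.
      * apply (sq_ge_of_log_derivative_le A B); [lra | | |].
        -- intros u Hu. apply A_derive. lra.
        -- intros u Hu. apply IH. lra.
        -- intros u Hu. apply ratio_le_in_window; [lra | lra |].
           intros w' Hw'. apply IH. lra.
  - intros w Hw IH.
    assert (HAw : A w <> 0) by (apply IH; lra).
    assert (Hc : continuity_pt A w).
    { apply (is_derive_continuity_pt _ _ (B w)), A_derive. lra. }
    generalize (continuity_pt_locally_away A w Hc HAw). apply filter_imp.
    intros v Hv Av. rewrite Av, Rabs_R0 in Hv. apply Rabs_pos_lt in HAw. lra.
Qed.

Lemma window_below_right_end (s : R) : t0 <= s < t0 + r -> s < be.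
Proof.
  intros Hs. apply Rnot_le_lt. intro Hbe.
  destruct (blowup_right (2 * (1 + k))) as [d [Hd Hblow]].
  set (v := Rmax t0 (be - d / 2)).
  assert (Hv : t0 <= v < be) by (split; [apply Rmax_l | unfold v; apply Rmax_case; lra]).
  assert (Hvd : be - d < v) by (assert (be - d / 2 <= v) by apply Rmax_r; lra).
  assert (Hvr : t0 <= v < t0 + r) by lra.
  pose proof (nonzero_in_window v Hvr (proj2 Hv)) as Hnz.
  pose proof (ratio_le_in_window v Hvr (proj2 Hv) Hnz) as Hratio.
  destruct (Hblow v (conj Hvd (proj2 Hv))) as [Hv0|Hbig]; [apply (Hnz v); lra | lra].
Qed.

Lemma window_forward (s : R) : t0 <= s < t0 + r ->
  s < be /\ A s <> 0 /\ 1 + Rabs (B s / A s) <= (2 * K + 3) * (1 + k).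
Proof.
  intros Hs. pose proof (Rabs_pos (B t0 / A t0)) as Hk.
  pose proof (window_below_right_end s Hs) as Hsb.
  pose proof (nonzero_in_window s Hs Hsb) as Hnz.
  pose proof (ratio_le_in_window s Hs Hsb Hnz) as Hratio.
  split; [exact Hsb | split; [apply Hnz; lra |]].
  assert (3 * (1 + k) <= (2 * K + 3) * (1 + k)) by (apply Rmult_le_compat_r; lra). lra.
Qed.

End ForwardWindow.

Lemma angle_lipschitz_on_reflect (al be K : R) (A B : R -> R) :
  angle_lipschitz_on al be K A B ->
  angle_lipschitz_on (- be) (- al) K (fun t => A (- t)) (fun t => - B (- t)).
Proof.
  intros Hangle t1 t2 H1 H12 H2 Hnz. cbv beta. unfold Rdiv.
  rewrite <- !Ropp_mult_distr_l, !atan_opp.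
  replace (- atan (B (- t2) * / A (- t2)) - - atan (B (- t1) * / A (- t1)))
    with (atan (B (- t1) / A (- t1)) - atan (B (- t2) / A (- t2))) by (unfold Rdiv; ring).
  replace (t2 - t1) with (- t1 - - t2) by ring.
  apply Hangle; [lra | lra | lra |].
  intros u Hu. rewrite <- (Ropp_involutive u). apply Hnz. lra.
Qed.

Lemma logderiv_blowup_reflect (al : R) (A B : R -> R) :
  logderiv_blowup_left al A B ->
  logderiv_blowup_right (- al) (fun t => A (- t)) (fun t => - B (- t)).
Proof.
  intros Hblow M. destruct (Hblow M) as [d [Hd H]]. exists d. split; [exact Hd |].
  intros t Ht. cbv beta. unfold Rdiv. rewrite <- Ropp_mult_distr_l, Rabs_Ropp. apply H. lra.
Qed.

Lemma window (al be K : R) (A B : R -> R) : 0 <= K ->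
  (forall t, al < t < be -> is_derive A t (B t)) ->
  angle_lipschitz_on al be K A B ->
  logderiv_blowup_left al A B -> logderiv_blowup_right be A B ->
  log_window al be (2 * K + 3) A B.
Proof.
  intros HK HD Hangle Hleft Hright t0 Ht0 HA0 s Hs.
  destruct (Rle_or_lt t0 s) as [Hts|Hst].
  - rewrite Rabs_pos_eq in Hs by lra.
    destruct (window_forward al be K A B HK HD Hangle Hright t0 Ht0 HA0 s) as [H1 H2];
      [unfold window_radius; lra | split; [lra | exact H2]].
  - rewrite Rabs_left in Hs by lra.
    (* Run the forward argument for [t |-> A (-t)], with log-derivative [-B(-t)/A(-t)]. *)
    assert (Hratio : forall t, - B (- t) / A (- t) = - (B (- t) / A (- t)))
      by (intro t; unfold Rdiv; ring).
    assert (HD' : forall t, - be < t < - al -> is_derive (fun u => A (- u)) t (- B (- t))).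
    { intros t Ht.
      replace (- B (- t)) with (scal (opp 1) (B (- t)))
        by (unfold scal, opp; simpl; unfold mult, opp; simpl; ring).
      apply (is_derive_comp A (fun u => - u)); [apply HD; lra |].
      exact (is_derive_opp (fun u => u) t 1 (is_derive_id t)). }
    destruct (window_forward (- be) (- al) K _ _ HK HD'
      (angle_lipschitz_on_reflect _ _ _ _ _ Hangle) (logderiv_blowup_reflect _ _ _ Hleft)
      (- t0) ltac:(lra)
      ltac:(cbv beta; rewrite Ropp_involutive; exact HA0) (- s)) as [H1 [H2 H3]];
      cbv beta in *; rewrite ?Hratio, ?Rabs_Ropp, ?Ropp_involutive in *.
    + unfold window_radius. lra.
    + split; [lra | split; assumption].
Qed.

(** * Local boundedness of H at points of analyticity *)

Definition H_formula (x y y1 y2 : R) : R := x ^ 2 * y * y2 / (y ^ 2 + x ^ 2 * y1 ^ 2).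

Lemma H_formula_0 (x y1 y2 : R) : H_formula x 0 y1 y2 = 0.
Proof. unfold H_formula, Rdiv. ring. Qed.

Lemma H_formula_le_nonzero (x y y1 y2 : R) : y <> 0 ->
  Rabs (H_formula x y y1 y2) <= x ^ 2 * Rabs y2 / Rabs y.
Proof.
  intros Hy. unfold H_formula.
  assert (Hy2 : 0 < y ^ 2) by (apply pow2_gt_0, Hy).
  assert (Hx2 : 0 <= x ^ 2 * y1 ^ 2) by (apply Rmult_le_pos; apply pow2_ge_0).
  assert (Hay : 0 < Rabs y) by (apply Rabs_pos_lt, Hy).
  assert (Hsq : Rabs y * Rabs y = y ^ 2) by (rewrite <- Rabs_mult, Rabs_pos_eq; nra).
  rewrite Rabs_div, (Rabs_pos_eq (_ + _)), !Rabs_mult, (Rabs_pos_eq (x ^ 2))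
    by (try apply pow2_ge_0; lra).
  apply Rle_trans with (x ^ 2 * Rabs y * Rabs y2 / y ^ 2).
  - unfold Rdiv. apply Rmult_le_compat_l.
    + apply Rmult_le_pos; [apply Rmult_le_pos; [apply pow2_ge_0 |] |]; apply Rabs_pos.
    + apply Rinv_le_contravar; lra.
  - right. rewrite <- Hsq. field. lra.
Qed.

Lemma H_formula_le_sq (x y y1 y2 L : R) : y1 <> 0 -> Rabs (y * y2) <= L * y1 ^ 2 ->
  Rabs (H_formula x y y1 y2) <= L.
Proof.
  intros Hy1 Hle. unfold H_formula.
  assert (Hq : 0 < y1 ^ 2) by (apply pow2_gt_0, Hy1).
  assert (HL : 0 <= L) by (pose proof (Rabs_pos (y * y2)); nra).
  destruct (Req_dec x 0) as [->|Hx].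
  { unfold Rdiv. rewrite pow_i, !Rmult_0_l, Rabs_R0 by lia. exact HL. }
  assert (Hx2 : 0 < x ^ 2) by (apply pow2_gt_0, Hx).
  assert (Hd : 0 < x ^ 2 * y1 ^ 2) by (apply Rmult_lt_0_compat; lra).
  pose proof (pow2_ge_0 y).
  rewrite Rabs_div, (Rabs_pos_eq (_ + _)), Rmult_assoc, Rabs_mult, (Rabs_pos_eq (x ^ 2))
    by lra.
  apply Rle_trans with (x ^ 2 * Rabs (y * y2) / (x ^ 2 * y1 ^ 2)).
  - unfold Rdiv. apply Rmult_le_compat_l.
    + pose proof (Rabs_pos (y * y2)). nra.
    + apply Rinv_le_contravar; lra.
  - apply Rle_trans with (x ^ 2 * (L * y1 ^ 2) / (x ^ 2 * y1 ^ 2)).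
    + unfold Rdiv. apply Rmult_le_compat_r; [left; apply Rinv_0_lt_compat, Hd |].
      apply Rmult_le_compat_l; lra.
    + right. field. split; lra.
Qed.

Lemma Hfun_ext_loc (f g : R -> R) (x : R) :
  locally x (fun y => f y = g y) -> Hfun f x = Hfun g x.
Proof.
  intro Hfg. unfold Hfun.
  rewrite (Derive_ext_loc f g x Hfg), (Derive_n_ext_loc f g 2 x Hfg).
  rewrite (locally_singleton _ _ Hfg). reflexivity.
Qed.

Lemma CV_radius_decr_n (c : nat -> R) (n : nat) : CV_radius (PS_decr_n c n) = CV_radius c.
Proof.
  induction n as [|n IH].
  - apply CV_radius_ext. intro k. reflexivity.
  - rewrite <- IH, <- (CV_radius_decr_1 (PS_decr_n c n)).
    apply CV_radius_ext. intro k. unfold PS_decr_n, PS_decr_1. f_equal. lia.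
Qed.

Lemma CV_radius_ge_of_ex_pseries (c : nat -> R) (h : R) :
  ex_pseries c h -> Rbar_le (Rabs h) (CV_radius c).
Proof.
  intro Hc. apply Rbar_not_lt_le. intro Hlt. apply (CV_disk_outside c h Hlt).
  apply is_lim_seq_ext with (fun k => scal (pow_n h k) (c k)).
  - intro k. rewrite pow_n_pow. unfold scal; simpl. unfold mult; simpl. ring.
  - apply ex_series_lim_0, Hc.
Qed.

Lemma PS_derive_n_eq0 (c : nat -> R) (m n k : nat) :
  (forall j, (j < m)%nat -> c j = 0) -> (k + n < m)%nat -> PS_derive_n n c k = 0.
Proof. intros Hc Hk. unfold PS_derive_n. rewrite Hc by exact Hk. ring. Qed.

Lemma PS_derive_n_neq0 (c : nat -> R) (n k : nat) :
  c (k + n)%nat <> 0 -> PS_derive_n n c k <> 0.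
Proof.
  intro Hc. unfold PS_derive_n, Rdiv.
  repeat apply Rmult_integral_contrapositive_currified;
    [apply INR_fact_neq_0 | apply Rinv_neq_0_compat, INR_fact_neq_0 | exact Hc].
Qed.

Lemma first_nonzero_coef (c : nat -> R) : (exists n, c n <> 0) ->
  exists m, c m <> 0 /\ forall k, (k < m)%nat -> c k = 0.
Proof.
  intros [n Hn]. induction n as [n IH] using lt_wf_ind.
  destruct (classic (forall k, (k < n)%nat -> c k = 0)) as [Hlow|Hlow]; [eauto |].
  apply not_all_ex_not in Hlow as [k Hk]. apply imply_to_and in Hk as [Hkn Hck].
  exact (IH k Hkn Hck).
Qed.

Lemma PSeries_decr_n_continuity_0 (c : nat -> R) (n : nat) :
  Rbar_lt 0 (CV_radius c) -> continuity_pt (PSeries (PS_decr_n c n)) 0.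
Proof.
  intro Hc. apply PSeries_continuity. rewrite Rabs_R0, CV_radius_decr_n. exact Hc.
Qed.

(* At a zero of order [S m], [f f''] vanishes to order [S m + pred m >= 2 m],
   which is exactly the order of [f'^2]. *)
Lemma zero_order_product_le (h q0 q1 q2 K0 K2 q : R) (m : nat) :
  Rabs h <= 1 -> Rabs q0 <= K0 -> Rabs q2 <= K2 -> 0 < q <= Rabs q1 ->
  Rabs (h ^ S m * q0 * (h ^ pred m * q2)) <= K0 * K2 / q ^ 2 * (h ^ m * q1) ^ 2.
Proof.
  intros Hh H0 H2 H1.
  assert (Epow : h ^ S m * h ^ pred m = (h ^ m) ^ 2 * h ^ (1 - m)).
  { rewrite <- pow_add, <- pow_mult, <- pow_add. f_equal. lia. }
  replace (h ^ S m * q0 * (h ^ pred m * q2)) with (h ^ S m * h ^ pred m * (q0 * q2)) by ring.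
  rewrite Epow, Rpow_mult_distr, !Rabs_mult, (Rabs_pos_eq ((h ^ m) ^ 2)) by apply pow2_ge_0.
  rewrite <- RPow_abs.
  assert (Hu : Rabs h ^ (1 - m) <= 1)
    by (rewrite <- (pow1 (1 - m)); apply pow_incr; split; [apply Rabs_pos | exact Hh]).
  assert (Hprod : Rabs h ^ (1 - m) * (Rabs q0 * Rabs q2) <= K0 * K2).
  { rewrite <- (Rmult_1_l (K0 * K2)).
    pose proof (Rabs_pos q0). pose proof (Rabs_pos q2).
    apply Rmult_le_compat; [apply pow_le, Rabs_pos | apply Rmult_le_pos; assumption | exact Hu |].
    apply Rmult_le_compat; assumption. }
  assert (HK : 0 <= K0 * K2) by (eapply Rle_trans; [| exact Hprod];
    apply Rmult_le_pos; [apply pow_le, Rabs_pos | apply Rmult_le_pos; apply Rabs_pos]).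
  assert (Hq : K0 * K2 <= K0 * K2 / q ^ 2 * q1 ^ 2).
  { assert (q ^ 2 <= q1 ^ 2) by (rewrite <- (pow2_abs q1); apply pow_incr; lra).
    apply Rle_trans with (K0 * K2 / q ^ 2 * q ^ 2); [right; field; lra |].
    apply Rmult_le_compat_l; [| assumption].
    apply Rmult_le_pos; [exact HK | left; apply Rinv_0_lt_compat, pow_lt; lra]. }
  replace (K0 * K2 / q ^ 2 * ((h ^ m) ^ 2 * q1 ^ 2))
    with ((h ^ m) ^ 2 * (K0 * K2 / q ^ 2 * q1 ^ 2)) by ring.
  rewrite Rmult_assoc. apply Rmult_le_compat_l; [apply pow2_ge_0 | lra].
Qed.

Lemma H_formula_PSeries_bounded_nonvanishing (c : nat -> R) (M : R) :
  Rbar_lt 0 (CV_radius c) -> c O <> 0 ->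
  exists L, locally 0 (fun h => forall x, Rabs x <= M ->
    Rabs (H_formula x (PSeries c h) (PSeries (PS_derive_n 1 c) h)
      (PSeries (PS_derive_n 2 c) h)) <= L).
Proof.
  intros Hc Hc0. set (P2 := PSeries (PS_derive_n 2 c)).
  assert (Hc0' : 0 < Rabs (c O) / 2) by (apply Rabs_pos_lt in Hc0; lra).
  exists (M ^ 2 * (Rabs (P2 0) + 1) / (Rabs (c O) / 2)).
  assert (Hcont0 : continuity_pt (PSeries c) 0)
    by (apply PSeries_continuity; rewrite Rabs_R0; exact Hc).
  assert (Hcont2 : continuity_pt P2 0).
  { apply PSeries_continuity. rewrite Rabs_R0, CV_radius_derive_n. exact Hc. }
  assert (Haway := continuity_pt_locally_away _ _ Hcont0).
  rewrite PSeries_0 in Haway.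
  generalize (filter_and _ _ (Haway Hc0) (continuity_pt_locally_bounded _ _ Hcont2)).
  apply filter_imp. intros h [H0 H2] x Hx.
  assert (HP0 : PSeries c h <> 0) by (intro E; rewrite E, Rabs_R0 in H0; lra).
  eapply Rle_trans; [apply H_formula_le_nonzero, HP0 |].
  unfold Rdiv. apply Rmult_le_compat.
  - apply Rmult_le_pos; [apply pow2_ge_0 | apply Rabs_pos].
  - left. apply Rinv_0_lt_compat, Rabs_pos_lt, HP0.
  - apply Rmult_le_compat; [apply pow2_ge_0 | apply Rabs_pos | | exact H2].
    apply pow_maj_Rabs, Hx.
  - apply Rinv_le_contravar; assumption.
Qed.

Lemma H_formula_PSeries_bounded_vanishing (c : nat -> R) (m : nat) :
  Rbar_lt 0 (CV_radius c) -> c (S m) <> 0 -> (forall k, (k < S m)%nat -> c k = 0) ->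
  exists L, locally 0 (fun h => forall x,
    Rabs (H_formula x (PSeries c h) (PSeries (PS_derive_n 1 c) h)
      (PSeries (PS_derive_n 2 c) h)) <= L).
Proof.
  intros Hc Hcm Hlow.
  set (Q0 := PSeries (PS_decr_n c (S m))).
  set (Q1 := PSeries (PS_decr_n (PS_derive_n 1 c) m)).
  set (Q2 := PSeries (PS_decr_n (PS_derive_n 2 c) (pred m))).
  assert (F0 : forall h, PSeries c h = h ^ S m * Q0 h)
    by (intro h; apply PSeries_decr_n_aux, Hlow).
  assert (F1 : forall h, PSeries (PS_derive_n 1 c) h = h ^ m * Q1 h).
  { intro h. apply PSeries_decr_n_aux. intros k Hk.
    apply (PS_derive_n_eq0 _ (S m)); [exact Hlow | lia]. }
  assert (F2 : forall h, PSeries (PS_derive_n 2 c) h = h ^ pred m * Q2 h).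
  { intro h. apply PSeries_decr_n_aux. intros k Hk.
    apply (PS_derive_n_eq0 _ (S m)); [exact Hlow | lia]. }
  assert (HQ1 : Q1 0 <> 0).
  { unfold Q1. rewrite PSeries_0. unfold PS_decr_n. rewrite Nat.add_0_r.
    apply PS_derive_n_neq0. rewrite Nat.add_1_r. exact Hcm. }
  assert (Hq : 0 < Rabs (Q1 0) / 2) by (apply Rabs_pos_lt in HQ1; lra).
  assert (Hc1 : Rbar_lt 0 (CV_radius (PS_derive_n 1 c)))
    by (rewrite CV_radius_derive_n; exact Hc).
  assert (Hc2 : Rbar_lt 0 (CV_radius (PS_derive_n 2 c)))
    by (rewrite CV_radius_derive_n; exact Hc).
  pose proof (PSeries_decr_n_continuity_0 _ (S m) Hc) as HQ0c.
  pose proof (PSeries_decr_n_continuity_0 _ m Hc1) as HQ1c.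
  pose proof (PSeries_decr_n_continuity_0 _ (pred m) Hc2) as HQ2c.
  exists ((Rabs (Q0 0) + 1) * (Rabs (Q2 0) + 1) / (Rabs (Q1 0) / 2) ^ 2).
  generalize (filter_and _ _ (continuity_pt_locally_bounded Q0 0 HQ0c)
    (filter_and _ _ (continuity_pt_locally_bounded Q2 0 HQ2c)
      (filter_and _ _ (continuity_pt_locally_away Q1 0 HQ1c HQ1)
        (locally_ball 0 (mkposreal 1 Rlt_0_1))))).
  apply filter_imp. intros h [H0 [H2 [H1 Hh]]] x.
  rewrite F0, F1, F2.
  destruct (Req_dec h 0) as [->|Hh0].
  { rewrite pow_i, Rmult_0_l, H_formula_0, Rabs_R0 by lia.
    pose proof (Rabs_pos (Q0 0)). pose proof (Rabs_pos (Q2 0)).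
    apply Rmult_le_pos; [apply Rmult_le_pos; lra |].
    left. apply Rinv_0_lt_compat, pow_lt, Hq. }
  apply H_formula_le_sq.
  - apply Rmult_integral_contrapositive_currified; [apply pow_nonzero, Hh0 |].
    intro E. rewrite E, Rabs_R0 in H1. lra.
  - apply zero_order_product_le; try assumption; [| lra].
    change (Rabs (h - 0) < 1) in Hh. rewrite Rminus_0_r in Hh. lra.
Qed.

Lemma H_formula_PSeries_locally_bounded (c : nat -> R) (M : R) :
  Rbar_lt 0 (CV_radius c) ->
  exists L, locally 0 (fun h => forall x, Rabs x <= M ->
    Rabs (H_formula x (PSeries c h) (PSeries (PS_derive_n 1 c) h)
      (PSeries (PS_derive_n 2 c) h)) <= L).
Proof.
  intro Hc. destruct (classic (exists n, c n <> 0)) as [Hnz|Hzero].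
  - destruct (first_nonzero_coef c Hnz) as [[|m] [Hm Hlow]].
    + exact (H_formula_PSeries_bounded_nonvanishing c M Hc Hm).
    + destruct (H_formula_PSeries_bounded_vanishing c m Hc Hm Hlow) as [L HL].
      exists L. revert HL. apply filter_imp. auto.
  - exists 0. apply filter_forall. intros h x _.
    replace (PSeries c h) with 0; [rewrite H_formula_0, Rabs_R0; lra |].
    rewrite (PSeries_ext c (fun _ => 0)), PSeries_const_0; [reflexivity |].
    intro n. apply NNPP. intro Hn. apply Hzero. exists n. exact Hn.
Qed.

Lemma Derive_n_PSeries_shift (c : nat -> R) (z x : R) (n : nat) :
  Rbar_lt (Rabs (x - z)) (CV_radius c) ->
  Derive_n (fun y => PSeries c (y - z)) n x = PSeries (PS_derive_n n c) (x - z).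
Proof. intro Hx. unfold Rminus. rewrite Derive_n_comp_trans. apply Derive_n_PSeries, Hx. Qed.

Lemma locally_CV_disk (c : nat -> R) (z : R) : Rbar_lt 0 (CV_radius c) ->
  locally z (fun x => Rbar_lt (Rabs (x - z)) (CV_radius c)).
Proof.
  destruct (CV_radius c) as [r| |]; simpl; intro Hr.
  - exists (mkposreal r Hr). intros y Hy. exact Hy.
  - apply filter_forall. intros _. exact I.
  - contradiction.
Qed.

Lemma locally_shift (P : R -> Prop) (z : R) : locally 0 P -> locally z (fun x => P (x - z)).
Proof.
  intros [eps Heps]. exists eps. intros y Hy. apply Heps.
  change (Rabs (y - z - 0) < eps). rewrite Rminus_0_r. exact Hy.
Qed.

Lemma Hfun_PSeries_locally_bounded (c : nat -> R) (z : R) :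
  Rbar_lt 0 (CV_radius c) ->
  exists L, locally z (fun x => Rabs (Hfun (fun y => PSeries c (y - z)) x) <= L).
Proof.
  intro Hc. destruct (H_formula_PSeries_locally_bounded c (Rabs z + 1) Hc) as [L HL].
  exists L.
  generalize (filter_and _ _ (locally_shift _ z HL)
    (filter_and _ _ (locally_CV_disk c z Hc) (locally_ball z (mkposreal 1 Rlt_0_1)))).
  apply filter_imp. intros x [Hb [Hdisk Hx]].
  change (Rabs (H_formula x (PSeries c (x - z)) (Derive_n (fun y => PSeries c (y - z)) 1 x)
    (Derive_n (fun y => PSeries c (y - z)) 2 x)) <= L).
  rewrite !Derive_n_PSeries_shift by exact Hdisk.
  apply Hb. change (Rabs (x - z) < 1) in Hx.
  replace x with (z + (x - z)) at 1 by ring.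
  eapply Rle_trans; [apply Rabs_triang | lra].
Qed.

Lemma real_analytic_germ (D : R -> Prop) (g : R -> R) (z : R) :
  real_analytic_on D g -> D z ->
  exists c, Rbar_lt 0 (CV_radius c) /\ locally z (fun x => g x = PSeries c (x - z)).
Proof.
  intros Hg Hz. destruct (Hg z Hz) as [r [Hr [c Hc]]]. exists c. split.
  - apply Rbar_lt_le_trans with (Rabs (r / 2)); [simpl; rewrite Rabs_pos_eq; lra |].
    apply CV_radius_ge_of_ex_pseries. exists (g (z + r / 2)).
    pose proof (Hc (z + r / 2)) as Hhalf.
    replace (z + r / 2 - z) with (r / 2) in Hhalf by ring.
    apply Hhalf. rewrite Rabs_pos_eq; lra.
  - exists (mkposreal r Hr). intros x Hx. symmetry. apply is_pseries_unique, Hc, Hx.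
Qed.

Lemma real_analytic_ex_derive_n (D : R -> Prop) (g : R -> R) (z : R) (n : nat) :
  real_analytic_on D g -> D z -> ex_derive_n g n z.
Proof.
  intros Hg Hz. destruct (real_analytic_germ D g z Hg Hz) as [c [Hc Hloc]].
  apply (ex_derive_n_ext_loc (fun x => PSeries c (x - z))).
  - revert Hloc. apply filter_imp. intros x Hx. symmetry. exact Hx.
  - unfold Rminus. apply ex_derive_n_comp_trans. rewrite Rplus_opp_r.
    apply ex_derive_n_PSeries. rewrite Rabs_R0. exact Hc.
Qed.

Lemma real_analytic_Hfun_locally_bounded (D : R -> Prop) (g : R -> R) (z : R) :
  real_analytic_on D g -> D z -> exists L, locally z (fun x => Rabs (Hfun g x) <= L).
Proof.
  intros Hg Hz. destruct (real_analytic_germ D g z Hg Hz) as [c [Hc Hloc]].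
  destruct (Hfun_PSeries_locally_bounded c z Hc) as [L HL]. exists L.
  generalize (filter_and _ _ HL (locally_locally _ _ Hloc)). apply filter_imp.
  intros x [Hb Hx]. rewrite (Hfun_ext_loc _ _ x Hx). exact Hb.
Qed.

Lemma bounded_on_segment (F : R -> R) (p q : R) :
  (forall w, p <= w <= q -> exists L, locally w (fun x => Rabs (F x) <= L)) ->
  exists L, forall x, p <= x <= q -> Rabs (F x) <= L.
Proof.
  intro Hloc. destruct (Rle_or_lt p q) as [Hpq|Hqp]; [| exists 0; intros x Hx; lra].
  enough (H : forall w, p <= w <= q -> exists L, forall x, p <= x <= w -> Rabs (F x) <= L)
    by (apply H; lra).
  apply real_induction; [exact Hpq | |].
  - intros w Hw IH. destruct (Hloc w Hw) as [L0 [d Hd]]. pose proof (cond_pos d).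
    destruct (Req_dec w p) as [->|Hne].
    { exists L0. intros x Hx. replace x with p by lra. apply Hd, ball_center. }
    set (v := Rmax p (w - d / 2)).
    assert (Hv : w - d / 2 <= v) by apply Rmax_r.
    destruct (IH v) as [L1 HL1]; [split; [apply Rmax_l | unfold v; apply Rmax_case; lra] |].
    exists (Rmax L0 L1). intros x Hx. destruct (Rle_or_lt x v) as [Hxv|Hxv].
    + eapply Rle_trans; [apply HL1; lra | apply Rmax_r].
    + eapply Rle_trans; [apply Hd, ball_of_Rabs_lt | apply Rmax_l].
      rewrite Rabs_left1; lra.
  - intros s Hs IH. destruct (IH s) as [L1 HL1]; [lra |].
    destruct (Hloc s) as [L0 [d Hd]]; [lra |].
    exists d. intros w Hw. change (Rabs (w - s) < d) in Hw.
    exists (Rmax L0 L1). intros x Hx. destruct (Rle_or_lt x s) as [Hxs|Hxs].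
    + eapply Rle_trans; [apply HL1; lra | apply Rmax_r].
    + eapply Rle_trans; [apply Hd, ball_of_Rabs_lt | apply Rmax_l].
      apply Rabs_lt_between' in Hw. rewrite Rabs_pos_eq; lra.
Qed.

Lemma Hfun_ext_ioo (a b x : R) (f g : R -> R) :
  (forall y, a < y < b -> g y = f y) -> a < x < b -> Hfun f x = Hfun g x.
Proof.
  intros Hgf Hx. apply Hfun_ext_loc.
  apply (locally_interval _ x a b); [exact (proj1 Hx) | exact (proj2 Hx) |].
  intros y Hay Hyb. symmetry. apply Hgf. split; assumption.
Qed.

Lemma Hfun_extension_bounded (D : R -> Prop) (a b e : R) (f g : R -> R) :
  real_analytic_on D g -> D e -> (forall y, a < y < b -> g y = f y) ->
  exists d L, 0 < d /\ forall x, Rabs (x - e) < d -> a < x < b -> Rabs (Hfun f x) <= L.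
Proof.
  intros Hg He Hgf. destruct (real_analytic_Hfun_locally_bounded D g e Hg He) as [L [d Hd]].
  exists d, L. split; [apply cond_pos |]. intros x Hx Hab.
  rewrite (Hfun_ext_ioo a b x f g Hgf Hab). apply Hd, ball_of_Rabs_lt, Hx.
Qed.

Lemma Hfun_bounded_near_left (a b : R) (f : R -> R) : a < b ->
  ((exists C, 0 < C /\ limsup_H_le_right f a C) \/
   (exists eps, 0 < eps /\ exists g : R -> R,
      real_analytic_on (ioo (a - eps) b) g /\ (forall x, ioo a b x -> g x = f x))) ->
  exists d L, 0 < d /\ forall x, a < x < a + d -> x < b -> Rabs (Hfun f x) <= L.
Proof.
  intros Hab [[C [HC Hlim]] | [eps [Heps [g [Hg Hgf]]]]].
  - destruct (Hlim 1 Rlt_0_1) as [d [Hd HdC]]. exists d, (C + 1).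
    split; [exact Hd |]. intros x Hx _. exact (HdC x Hx).
  - destruct (Hfun_extension_bounded _ a b a f g Hg ltac:(unfold ioo; lra) Hgf)
      as [d [L [Hd HL]]].
    exists d, L. split; [exact Hd |]. intros x Hx Hxb.
    apply HL; [rewrite Rabs_pos_eq | split]; lra.
Qed.

Lemma Hfun_bounded_near_right (a b : R) (f : R -> R) : a < b ->
  ((exists C, 0 < C /\ limsup_H_le_left f b C) \/
   (exists eps, 0 < eps /\ exists g : R -> R,
      real_analytic_on (ioo a (b + eps)) g /\ (forall x, ioo a b x -> g x = f x))) ->
  exists d L, 0 < d /\ forall x, b - d < x < b -> a < x -> Rabs (Hfun f x) <= L.
Proof.
  intros Hab [[C [HC Hlim]] | [eps [Heps [g [Hg Hgf]]]]].
  - destruct (Hlim 1 Rlt_0_1) as [d [Hd HdC]]. exists d, (C + 1).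
    split; [exact Hd |]. intros x Hx _. exact (HdC x Hx).
  - destruct (Hfun_extension_bounded _ a b b f g Hg ltac:(unfold ioo; lra) Hgf)
      as [d [L [Hd HL]]].
    exists d, L. split; [exact Hd |]. intros x Hx Hxa.
    apply HL; [rewrite Rabs_left | split]; lra.
Qed.

Lemma Hfun_bounded (a b : R) (f : R -> R) : a < b -> real_analytic_on (ioo a b) f ->
  ((exists C, 0 < C /\ limsup_H_le_right f a C) \/
   (exists eps, 0 < eps /\ exists g : R -> R,
      real_analytic_on (ioo (a - eps) b) g /\ (forall x, ioo a b x -> g x = f x))) ->
  ((exists C, 0 < C /\ limsup_H_le_left f b C) \/
   (exists eps, 0 < eps /\ exists g : R -> R,
      real_analytic_on (ioo a (b + eps)) g /\ (forall x, ioo a b x -> g x = f x))) ->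
  exists L, 0 <= L /\ forall x, a < x < b -> Rabs (Hfun f x) <= L.
Proof.
  intros Hab Hf Hleft Hright.
  destruct (Hfun_bounded_near_left a b f Hab Hleft) as [da [La [Hda HLa]]].
  destruct (Hfun_bounded_near_right a b f Hab Hright) as [db [Lb [Hdb HLb]]].
  destruct (bounded_on_segment (Hfun f) (a + da / 2) (b - db / 2)) as [Lm HLm].
  { intros w Hw. destruct (Rle_or_lt w a) as [Hwa|Haw]; [lra |].
    destruct (Rle_or_lt b w) as [Hbw|Hwb]; [lra |].
    apply (real_analytic_Hfun_locally_bounded (ioo a b)); [exact Hf | split; assumption]. }
  exists (Rmax 0 (Rmax La (Rmax Lb Lm))). split; [apply Rmax_l |].
  intros x Hx. eapply Rle_trans; [| apply Rmax_r].
  destruct (Rlt_or_le x (a + da / 2)) as [Hxa|Hxa].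
  { eapply Rle_trans; [apply HLa; lra | apply Rmax_l]. }
  eapply Rle_trans; [| apply Rmax_r].
  destruct (Rlt_or_le (b - db / 2) x) as [Hxb|Hxb].
  { eapply Rle_trans; [apply HLb; lra | apply Rmax_l]. }
  eapply Rle_trans; [apply HLm; lra | apply Rmax_r].
Qed.

(** * Logarithmic coordinates *)

Lemma is_derive_atan_ratio (A B : R -> R) (t dB : R) : A t <> 0 ->
  is_derive A t (B t) -> is_derive B t dB ->
  is_derive (fun s => atan (B s / A s)) t ((dB * A t - B t ^ 2) / (A t ^ 2 + B t ^ 2)).
Proof.
  intros HA HdA HdB.
  assert (Hdiv := is_derive_div B A t _ _ HdB HdA HA).
  assert (Hcomp := is_derive_comp atan (fun s => B s / A s) t _ _ (is_derive_atan _) Hdiv).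
  eapply is_derive_ext; [intro s; reflexivity |]. cbv beta in Hcomp.
  replace ((dB * A t - B t ^ 2) / (A t ^ 2 + B t ^ 2)) with
    (scal ((dB * A t - B t * B t) / A t ^ 2) (/ (1 + (B t / A t)²))); [exact Hcomp |].
  assert (0 < A t ^ 2) by (apply pow2_gt_0, HA).
  assert (0 <= B t ^ 2) by apply pow2_ge_0.
  unfold scal; simpl; unfold mult; simpl; unfold Rsqr.
  field. split; [| exact HA]. nra.
Qed.

Lemma cross_ratio_bound (y w : R) : y <> 0 ->
  Rabs ((y * w - w ^ 2) / (y ^ 2 + w ^ 2)) <= 3 / 2.
Proof.
  intro Hy. assert (Hy2 : 0 < y ^ 2) by (apply pow2_gt_0, Hy).
  assert (Hw2 : 0 <= w ^ 2) by apply pow2_ge_0.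
  rewrite Rabs_div, (Rabs_pos_eq (_ + _)) by lra.
  apply Rle_div_l; [lra |]. apply Rabs_le. split; nra.
Qed.

Definition flog (f : R -> R) (t : R) : R := f (exp t).
Definition dflog (f : R -> R) (t : R) : R := exp t * Derive f (exp t).

Lemma is_derive_flog (f : R -> R) (t : R) :
  is_derive f (exp t) (Derive f (exp t)) -> is_derive (flog f) t (dflog f t).
Proof.
  intro Hf. exact (is_derive_comp f exp t _ _ Hf (is_derive_exp t)).
Qed.

Lemma is_derive_dflog (f : R -> R) (t : R) :
  is_derive (Derive f) (exp t) (Derive_n f 2 (exp t)) ->
  is_derive (dflog f) t (dflog f t + exp t ^ 2 * Derive_n f 2 (exp t)).
Proof.
  intro Hf.
  assert (H := is_derive_mult exp (fun s => Derive f (exp s)) t _ _ (is_derive_exp t)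
    (is_derive_comp (Derive f) exp t _ _ Hf (is_derive_exp t)) Rmult_comm).
  unfold dflog. replace (exp t * Derive f (exp t) + exp t ^ 2 * Derive_n f 2 (exp t))
    with (plus (mult (exp t) (Derive f (exp t)))
      (mult (exp t) (scal (exp t) (Derive_n f 2 (exp t))))); [exact H |].
  unfold plus, mult, scal; simpl; unfold mult; simpl. ring.
Qed.

Lemma is_derive_flog_angle (f : R -> R) (t : R) : flog f t <> 0 ->
  is_derive f (exp t) (Derive f (exp t)) ->
  is_derive (Derive f) (exp t) (Derive_n f 2 (exp t)) ->
  is_derive (fun s => atan (dflog f s / flog f s)) t
    (Hfun f (exp t)
     + (flog f t * dflog f t - dflog f t ^ 2) / (flog f t ^ 2 + dflog f t ^ 2)).
Proof.
  intros Hnz Hd1 Hd2.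
  replace (Hfun f (exp t) + _) with
    (((dflog f t + exp t ^ 2 * Derive_n f 2 (exp t)) * flog f t - dflog f t ^ 2)
      / (flog f t ^ 2 + dflog f t ^ 2)).
  - apply is_derive_atan_ratio;
      [exact Hnz | apply is_derive_flog, Hd1 | apply is_derive_dflog, Hd2].
  - assert (0 < flog f t ^ 2) by (apply pow2_gt_0, Hnz).
    assert (0 <= dflog f t ^ 2) by apply pow2_ge_0.
    unfold Hfun, dflog, flog in *. change (Derive_n f 1) with (Derive f). field. lra.
Qed.

Lemma exp_in_ioo (a b t : R) : 0 < a -> a < b -> ln a < t < ln b -> a < exp t < b.
Proof.
  intros Ha Hab Ht. rewrite <- (exp_ln a Ha), <- (exp_ln b) by lra.
  split; apply exp_increasing; lra.
Qed.

Lemma angle_lipschitz_flog (a b L : R) (f : R -> R) : 0 < a -> a < b ->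
  (forall x, a < x < b -> is_derive f x (Derive f x)) ->
  (forall x, a < x < b -> is_derive (Derive f) x (Derive_n f 2 x)) ->
  (forall x, a < x < b -> Rabs (Hfun f x) <= L) ->
  angle_lipschitz_on (ln a) (ln b) (L + 3 / 2) (flog f) (dflog f).
Proof.
  intros Ha Hab Hd1 Hd2 HL t1 t2 Ht1 H12 Ht2 Hnz.
  assert (Hexp : forall s, t1 <= s <= t2 -> a < exp s < b)
    by (intros s Hs; apply exp_in_ioo; lra).
  apply (MVT_abs_le (fun s => atan (dflog f s / flog f s))
    (fun s => Hfun f (exp s) + (flog f s * dflog f s - dflog f s ^ 2)
      / (flog f s ^ 2 + dflog f s ^ 2))); [exact H12 | |].
  - intros s Hs.
    apply is_derive_flog_angle; [apply Hnz, Hs | apply Hd1 | apply Hd2]; apply Hexp, Hs.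
  - intros s Hs. eapply Rle_trans; [apply Rabs_triang |].
    apply Rplus_le_compat; [apply HL, Hexp, Hs | apply cross_ratio_bound, Hnz, Hs].
Qed.

Lemma kappa_finite_nonzero (f : R -> R) (x k : R) :
  x <> 0 -> kappa f x = Finite k -> f x <> 0.
Proof.
  intros Hx Hk. unfold kappa in Hk.
  destruct (Req_EM_T x 0); [contradiction |].
  destruct (Req_EM_T (f x) 0); [discriminate | assumption].
Qed.

Lemma kappa_flog (f : R -> R) (x : R) : 0 < x -> f x <> 0 ->
  kappa f x = Finite (Rabs (dflog f (ln x) / flog f (ln x))).
Proof.
  intros Hx Hf. unfold kappa, dflog, flog. rewrite exp_ln by exact Hx.
  destruct (Req_EM_T x 0); [lra |]. destruct (Req_EM_T (f x) 0); [contradiction |].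
  unfold Rdiv. rewrite !Rabs_mult, Rabs_inv. reflexivity.
Qed.

Lemma reldist_lt_ln (x y r : R) : 0 < x -> Rbar_lt (reldist y x) (Finite r) ->
  0 < y /\ Rabs (ln y - ln x) < r.
Proof.
  intros Hx H. unfold reldist in H.
  destruct (Req_EM_T y 0); [destruct (Req_EM_T x 0); [lra | contradiction] |].
  destruct (Rlt_dec 0 (y * x)) as [Hyx|]; [| contradiction].
  assert (Hy : 0 < y) by (destruct (Rle_or_lt y 0); [nra | assumption]).
  split; [exact Hy |]. simpl in H. rewrite ln_div in H by lra.
  rewrite Rabs_minus_sym. exact H.
Qed.

Lemma flog_blowup_left (a : R) (f : R -> R) : 0 < a -> kappa_to_infty_right f a ->
  logderiv_blowup_left (ln a) (flog f) (dflog f).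
Proof.
  intros Ha Hk M. destruct (Hk M) as [d0 [Hd0 Hbig]].
  exists (ln (a + d0) - ln a).
  split; [assert (ln a < ln (a + d0)) by (apply ln_increasing; lra); lra |].
  intros t Ht. destruct (Req_dec (flog f t) 0) as [Hz|Hnz]; [left; exact Hz | right].
  assert (Hx : a < exp t < a + d0) by (apply exp_in_ioo; lra).
  specialize (Hbig (exp t) Hx). unfold flog in Hnz.
  rewrite kappa_flog, ln_exp in Hbig by (apply exp_pos || exact Hnz). exact Hbig.
Qed.

Lemma flog_blowup_right (a b : R) (f : R -> R) : 0 < a -> a < b ->
  kappa_to_infty_left f b -> logderiv_blowup_right (ln b) (flog f) (dflog f).
Proof.
  intros Ha Hab Hk M. destruct (Hk M) as [d0 [Hd0 Hbig]].
  set (x0 := Rmax (b - d0) a).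
  assert (Hx0 : a <= x0 < b) by (split; [apply Rmax_r | unfold x0; apply Rmax_case; lra]).
  exists (ln b - ln x0).
  split; [assert (ln x0 < ln b) by (apply ln_increasing; lra); lra |].
  intros t Ht. destruct (Req_dec (flog f t) 0) as [Hz|Hnz]; [left; exact Hz | right].
  assert (Hx : x0 < exp t < b) by (apply exp_in_ioo; lra).
  assert (b - d0 <= x0) by apply Rmax_l.
  specialize (Hbig (exp t) ltac:(lra)). unfold flog in Hnz.
  rewrite kappa_flog, ln_exp in Hbig by (apply exp_pos || exact Hnz). exact Hbig.
Qed.

Lemma amenable_of_log_window (a b C : R) (f : R -> R) : 0 < a -> a < b -> 0 < C ->
  log_window (ln a) (ln b) C (flog f) (dflog f) -> amenable (ioo a b) f.
Proof.
  intros Ha Hab HC Hwin. exists C. split; [exact HC |].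
  intros x [Hax Hxb] k Hk.
  assert (Hfx : f x <> 0) by (apply (kappa_finite_nonzero f x k); [lra | exact Hk]).
  rewrite kappa_flog in Hk by (lra || exact Hfx). injection Hk as Ek.
  assert (Hnear : forall y, Rbar_lt (reldist y x) (Finite (1 / (C * (1 + k)))) ->
    ioo a b y /\ Rbar_le (mu f y) (Finite (C * (1 + k)))).
  { intros y Hy. destruct (reldist_lt_ln x y _ ltac:(lra) Hy) as [Hy0 Hlog].
    rewrite <- Ek in Hlog |- *.
    destruct (Hwin (ln x) (conj (ln_increasing a x Ha Hax) (ln_increasing x b ltac:(lra) Hxb))
      ltac:(unfold flog; rewrite exp_ln; lra) (ln y) Hlog) as [Hin [Hfy Hmu]].
    unfold flog in Hfy. rewrite exp_ln in Hfy by exact Hy0.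
    split.
    - rewrite <- (exp_ln y Hy0). apply exp_in_ioo; assumption.
    - unfold mu. rewrite kappa_flog by assumption. exact Hmu. }
  split; intros y Hy; apply Hnear, Hy.
Qed.

Theorem proposition1 (a b : R) (f : R -> R) :
  0 < a -> a < b ->
  real_analytic_on (ioo a b) f ->
  (exists x, ioo a b x /\ f x <> 0) ->
  kappa_to_infty_right f a ->
  kappa_to_infty_left f b ->
  ((exists C, 0 < C /\ limsup_H_le_right f a C) \/
   (exists eps, 0 < eps /\ exists g : R -> R,
      real_analytic_on (ioo (a - eps) b) g /\
      (forall x, ioo a b x -> g x = f x))) ->
  ((exists C, 0 < C /\ limsup_H_le_left f b C) \/
   (exists eps, 0 < eps /\ exists g : R -> R,
      real_analytic_on (ioo a (b + eps)) g /\
      (forall x, ioo a b x -> g x = f x))) ->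
  amenable (ioo a b) f.
Proof.
  (* Where [f] vanishes, [kappa] is infinite and amenability asks nothing. *)
  intros Ha Hab Hf _ Hka Hkb HHa HHb.
  assert (Hd : forall n x, a < x < b -> ex_derive_n f n x)
    by (intros n x Hx; exact (real_analytic_ex_derive_n _ f x n Hf Hx)).
  destruct (Hfun_bounded a b f Hab Hf HHa HHb) as [L [HL0 HL]].
  apply (amenable_of_log_window a b (2 * (L + 3 / 2) + 3) f Ha Hab ltac:(lra)).
  apply window;
    [lra | | | apply (flog_blowup_left a f) | apply (flog_blowup_right a b f)]; try assumption.
  - intros t Ht. apply is_derive_flog, Derive_correct, (Hd 1%nat), exp_in_ioo; assumption.
  - apply angle_lipschitz_flog; try assumption.
    + intros x Hx. apply Derive_correct, (Hd 1%nat x Hx).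
    + intros x Hx. apply Derive_correct, (Hd 2%nat x Hx).
Qed.
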